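(* Let $X\in\mathbb{R}^{n\times D}$ (possibly already augmented with a column of ones for the bias) with $X^\top X$ invertible, and $y\in\mathbb{R}^n$. Let $\mathcal{Q}$ be a partition of $\{1,\dots,D\}$ and $\mathcal{P}$ a partition of $\{1,\dots,n\}$ such that $(\mathcal{P},\mathcal{Q})$ is equitable on $X$ and $(X^\top y)_{j_1}=(X^\top y)_{j_2}$ whenever $j_1,j_2$ share a color of $\mathcal{Q}$. Set $X'=\Pi_{\mathcal{P}}^{\mathrm{Scaled}}X\Pi_{\mathcal{Q}}$, $y'=\Pi_{\mathcal{P}}^{\mathrm{Scaled}}y$, $W'=\Pi_{\mathcal{P}}^\top\Pi_{\mathcal{P}}$ (the diagonal matrix with $W'_{SS}=|S|$), and assume $(X')^\top W'X'$ is invertible. Let $w'=((X')^\top W'X')^{-1}(X')^\top W'y'$. Then $\Pi_{\mathcal{Q}}w'=(X^\top X)^{-1}X^\top y$.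
   Context: A partition of a finite set is a set of nonempty pairwise disjoint subsets (''colors'') covering it. A pair $(\mathcal{P},\mathcal{Q})$ of partitions of the row and column indices of $A$ is equitable on $A$ if for every $S\in\mathcal{P}$, $T\in\mathcal{Q}$: $\sum_{j\in T}A_{ij}$ is the same for all $i\in S$ and $\sum_{i\in S}A_{ij}$ is the same for all $j\in T$. For a partition $\mathcal{Q}$ of $\{1,\dots,D\}$, $\Pi_{\mathcal{Q}}\in\{0,1\}^{D\times|\mathcal{Q}|}$ has $(\Pi_{\mathcal{Q}})_{jT}=1$ iff $j\in T$; $\Pi^{\mathrm{Scaled}}_{\mathcal{Q}}\in\mathbb{R}^{|\mathcal{Q}|\times D}$ has entries $1/|T|$ if $j\in T$ and $0$ otherwise (row-normalized $\Pi_{\mathcal{Q}}^\top$); similarly for $\mathcal{P}$. *)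

From HB Require Import structures.
From mathcomp Require Import all_boot all_order all_algebra.
Set Implicit Arguments. Unset Strict Implicit. Unset Printing Implicit Defensive.
Import Order.TTheory GRing.Theory Num.Theory.
Local Open Scope ring_scope.

(* This is mathcomp's
   [partition P [set: 'I_n]] (which includes set0 \notin P). *)
Definition is_partition (n : nat) (P : {set {set 'I_n}}) : Prop :=
  partition P [set: 'I_n].

Definition color (n : nat) (P : {set {set 'I_n}}) (k : 'I_#|P|) : {set 'I_n} :=
  @enum_val _ (pred_of_set P) k.

Definition PiM (R : nzRingType) (D : nat) (Q : {set {set 'I_D}}) : 'M[R]_(D, #|Q|) :=
  \matrix_(j < D, k < #|Q|) (if j \in color k then 1 else 0).

Definition PiScaled (R : fieldType) (D : nat) (Q : {set {set 'I_D}}) : 'M[R]_(#|Q|, D) :=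
  \matrix_(k < #|Q|, j < D) (if j \in color k then (#|color k|%:R)^-1 else 0).

Definition equitable (R : nzRingType) (n D : nat) (P : {set {set 'I_n}})
  (Q : {set {set 'I_D}}) (A : 'M[R]_(n, D)) : Prop :=
  forall S T, S \in P -> T \in Q ->
    (forall i1 i2, i1 \in S -> i2 \in S ->
       \sum_(j in T) A i1 j = \sum_(j in T) A i2 j) /\
    (forall j1 j2, j1 \in T -> j2 \in T ->
       \sum_(i in S) A i j1 = \sum_(i in S) A i j2).

(* Let avgmx P = Pi_P Pi^Scaled_P, the symmetric projector averaging over the
   colors of P.  Equitability says exactly that avgmx P X = X avgmx Q, hence
   Pi_P X' = X Pi_Q: the compressed weighted normal equations are the normal
   equations of X restricted to vectors Pi_Q v.  Moreover avgmx Q commutes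
   with X^T X and fixes X^T y, so it fixes w = (X^T X)^-1 X^T y; thus
   w = Pi_Q (Pi^Scaled_Q w) already solves the restricted equations, and by
   uniqueness of their solution Pi_Q w' = w. *)
From HB Require Import structures.
From mathcomp Require Import all_boot all_order all_algebra.
Set Implicit Arguments. Unset Strict Implicit. Unset Printing Implicit Defensive.
Import Order.TTheory GRing.Theory Num.Theory.
Local Open Scope ring_scope.

Definition avgmx (R : fieldType) (m : nat) (P : {set {set 'I_m}}) : 'M[R]_m :=
  PiM R P *m PiScaled R P.

Section ColorAverage.
Variables (R : numFieldType) (m : nat) (P : {set {set 'I_m}}).
Hypothesis partP : is_partition P.

Lemma color_mem (k : 'I_#|P|) : color k \in P.
Proof. exact: enum_valP. Qed.

Lemma mem_pblock_self i : i \in pblock P i.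
Proof. by case/and3P: partP => /eqP covP _ _; rewrite mem_pblock covP inE. Qed.

Lemma pblock_mem_partition i : pblock P i \in P.
Proof. by case/and3P: partP => /eqP covP _ _; rewrite pblock_mem ?covP. Qed.

Lemma pblock_color i (k : 'I_#|P|) : i \in color k -> pblock P i = color k.
Proof. by case/and3P: partP => _ trivP _; apply: def_pblock (color_mem k). Qed.

Lemma natr_card_block_neq0 (S : {set 'I_m}) : S \in P -> (#|S|%:R : R) != 0.
Proof.
case/and3P: partP => _ _ P0 SP; rewrite pnatr_eq0 cards_eq0.
by apply: contraNneq P0 => <-.
Qed.

Lemma sum_colors_pblock (g : {set 'I_m} -> R) i :
  \sum_(k < #|P|) (if i \in color k then g (color k) else 0) = g (pblock P i).
Proof.
rewrite -(big_enum_val (A := pred_of_set P) (fun S => if i \in S then g S else 0)).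
rewrite (bigD1 (pblock P i)) ?pblock_mem_partition //= mem_pblock_self.
rewrite big1 ?addr0 // => S /andP[SP neS]; case: ifPn => // iS.
by case/and3P: partP => _ trivP _; rewrite (def_pblock trivP SP iS) eqxx in neS.
Qed.

Lemma PiScaled_mulPiM : PiScaled R P *m PiM R P = 1%:M.
Proof.
apply/matrixP => k l; rewrite !mxE (bigID (mem (color k))) /= addrC big1; last first.
  by move=> i /negbTE ik; rewrite !mxE ik mul0r.
rewrite add0r; case: eqVneq => [<-|kl].
  rewrite (eq_bigr (fun _ => (#|color k|%:R : R)^-1)); last first.
    by move=> i ik; rewrite !mxE ik mulr1.
  by rewrite sumr_const -[_ *+ _]mulr_natr mulVf ?natr_card_block_neq0 ?color_mem.
apply: big1 => i ik; rewrite !mxE ik; case: ifPn => [il|]; last by rewrite mulr0.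
by case/eqP: kl; apply: enum_val_inj; rewrite -/(color k) -/(color l)
  -(pblock_color ik) (pblock_color il).
Qed.

Lemma avgmx_PiM : avgmx R P *m PiM R P = PiM R P.
Proof. by rewrite -mulmxA PiScaled_mulPiM mulmx1. Qed.

Lemma trmx_avgmx : (avgmx R P)^T = avgmx R P.
Proof.
apply/matrixP => i i'; rewrite !mxE; apply: eq_bigr => k _; rewrite !mxE.
by do 2 case: ifP; rewrite ?mul1r ?mulr1 ?mul0r ?mulr0.
Qed.

Lemma avgmxE p (M : 'M[R]_(m, p)) i j :
  (avgmx R P *m M) i j = #|pblock P i|%:R^-1 * \sum_(i' in pblock P i) M i' j.
Proof.
rewrite -mulmxA mxE -(sum_colors_pblock (fun S => #|S|%:R^-1 * \sum_(i' in S) M i' j)).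
apply: eq_bigr => k _; rewrite !mxE; case: ifP => _; rewrite ?mul0r // mul1r.
rewrite mulr_sumr [RHS]big_mkcond; apply: eq_bigr => i' _; rewrite mxE.
by case: ifP; rewrite ?mul0r ?mulr0.
Qed.

Lemma avgmx_const (v : 'cV[R]_m) :
  (forall S i1 i2, S \in P -> i1 \in S -> i2 \in S -> v i1 0 = v i2 0) ->
  avgmx R P *m v = v.
Proof.
move=> vconst; apply/matrixP => i z; rewrite ord1 avgmxE.
rewrite (eq_bigr (fun _ => v i 0)) => [|i' i'P]; last first.
  exact: vconst (pblock_mem_partition i) i'P (mem_pblock_self i).
rewrite sumr_const -[v i 0 *+ _]mulr_natl.
by rewrite mulKf ?natr_card_block_neq0 ?pblock_mem_partition.
Qed.

End ColorAverage.

Lemma equitable_avgmx (R : numFieldType) (n D : nat)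
    (P : {set {set 'I_n}}) (Q : {set {set 'I_D}}) (X : 'M[R]_(n, D)) :
  is_partition P -> is_partition Q -> equitable P Q X ->
  avgmx R P *m X = X *m avgmx R Q.
Proof.
move=> partP partQ eqPQ; apply/matrixP => i j.
rewrite avgmxE // -[X *m _]trmxK trmx_mul trmx_avgmx [RHS]mxE avgmxE //.
under [in RHS]eq_bigr do rewrite mxE.
set S := pblock P i; set T := pblock Q j.
have [rowsS colsT] :=
  eqPQ S T (pblock_mem_partition partP i) (pblock_mem_partition partQ j).
have double_count :
    #|T|%:R * \sum_(i' in S) X i' j = #|S|%:R * \sum_(j' in T) X i j' :> R.
  transitivity (\sum_(j' in T) \sum_(i' in S) X i' j').
    rewrite mulr_natl -sumr_const; apply: eq_bigr => j' j'T.
    exact: colsT (mem_pblock_self partQ j) j'T.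
  rewrite exchange_big mulr_natl -sumr_const; apply: eq_bigr => i' i'S.
  exact: rowsS i'S (mem_pblock_self partP i).
have S_neq0 := natr_card_block_neq0 R partP (pblock_mem_partition partP i).
have T_neq0 := natr_card_block_neq0 R partQ (pblock_mem_partition partQ j).
by rewrite -[\sum_(i' in S) _](mulKf T_neq0) double_count mulrCA mulKf.
Qed.

Lemma equitable_trmx (R : nzRingType) (n D : nat) (P : {set {set 'I_n}})
    (Q : {set {set 'I_D}}) (X : 'M[R]_(n, D)) :
  equitable P Q X -> equitable Q P X^T.
Proof.
move=> eqPQ T S TQ SP; have [rowsS colsT] := eqPQ S T SP TQ.
by split=> k1 k2 k1in k2in; under eq_bigr do rewrite mxE;
  under [RHS]eq_bigr do rewrite mxE; [exact: colsT | exact: rowsS].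
Qed.

Section CompressedLeastSquares.
Variables (R : numFieldType) (n D : nat) (X : 'M[R]_(n, D)).
Variables (P : {set {set 'I_n}}) (Q : {set {set 'I_D}}).
Hypotheses (partP : is_partition P) (partQ : is_partition Q) (eqPQ : equitable P Q X).

Local Notation X' := (PiScaled R P *m X *m PiM R Q).
Local Notation W' := ((PiM R P)^T *m PiM R P).

Lemma PiM_mul_compressed : PiM R P *m X' = X *m PiM R Q.
Proof.
rewrite !mulmxA -[PiM R P *m _]/(avgmx R P) (equitable_avgmx partP partQ eqPQ).
by rewrite -mulmxA avgmx_PiM.
Qed.

Lemma compressed_gram : X'^T *m W' *m X' = (X *m PiM R Q)^T *m (X *m PiM R Q).
Proof. by rewrite (mulmxA X'^T) -trmx_mul -mulmxA PiM_mul_compressed. Qed.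

Lemma compressed_moment (y : 'cV[R]_n) :
  X'^T *m W' *m (PiScaled R P *m y) = (X *m PiM R Q)^T *m y.
Proof.
rewrite (mulmxA X'^T) -trmx_mul -mulmxA PiM_mul_compressed.
rewrite (mulmxA (PiM R P)) -[PiM R P *m _]/(avgmx R P).
rewrite mulmxA -trmx_avgmx -trmx_mul.
by rewrite mulmxA (equitable_avgmx partP partQ eqPQ) -mulmxA avgmx_PiM.
Qed.

Lemma avgmx_gram : avgmx R Q *m (X^T *m X) = X^T *m X *m avgmx R Q.
Proof.
rewrite mulmxA (equitable_avgmx partQ partP (equitable_trmx eqPQ)) -(mulmxA X^T).
by rewrite -(mulmxA X^T (avgmx R P)) (equitable_avgmx partP partQ eqPQ).
Qed.

Lemma avgmx_least_squares (y : 'cV[R]_n) :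
  X^T *m X \in unitmx ->
  (forall T j1 j2, T \in Q -> j1 \in T -> j2 \in T ->
     (X^T *m y) j1 0 = (X^T *m y) j2 0) ->
  avgmx R Q *m (invmx (X^T *m X) *m X^T *m y) = invmx (X^T *m X) *m X^T *m y.
Proof.
move=> unitA Xty_const.
have avgmx_inv : avgmx R Q *m invmx (X^T *m X) = invmx (X^T *m X) *m avgmx R Q.
  rewrite -[LHS](mulKmx unitA) (mulmxA (X^T *m X)) -avgmx_gram.
  by rewrite mulmxK.
rewrite !mulmxA avgmx_inv -(mulmxA (_ *m avgmx R Q)) -(mulmxA _ (avgmx R Q)).
by rewrite (avgmx_const partQ Xty_const) mulmxA.
Qed.

End CompressedLeastSquares.

Theorem mainTheorem7 (R : realFieldType) (n D : nat)
  (X : 'M[R]_(n, D)) (y : 'cV[R]_n)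
  (P : {set {set 'I_n}}) (Q : {set {set 'I_D}}) :
  X^T *m X \in unitmx ->
  is_partition P -> is_partition Q ->
  equitable P Q X ->
  (forall T j1 j2, T \in Q -> j1 \in T -> j2 \in T ->
     (X^T *m y) j1 0 = (X^T *m y) j2 0) ->
  let X' := PiScaled R P *m X *m PiM R Q in
  let y' := PiScaled R P *m y in
  let W' := (PiM R P)^T *m PiM R P in
  (X'^T *m W' *m X') \in unitmx ->
  let w' := invmx (X'^T *m W' *m X') *m X'^T *m W' *m y' in
  PiM R Q *m w' = invmx (X^T *m X) *m X^T *m y.
Proof.
move=> unitA partP partQ eqPQ Xty_const X' y' W' unitG w'.
set C := PiM R Q; set G := (X *m C)^T *m (X *m C).
have gram : X'^T *m W' *m X' = G by exact: compressed_gram.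
have moment : X'^T *m W' *m y' = (X *m C)^T *m y by exact: compressed_moment.
rewrite gram in unitG; rewrite /w' gram.
rewrite -(mulmxA (invmx G *m X'^T)) -(mulmxA (invmx G)) (mulmxA X'^T) moment.
set w := invmx (X^T *m X) *m X^T *m y.
have w_const : C *m (PiScaled R Q *m w) = w.
  by rewrite mulmxA (avgmx_least_squares partP partQ eqPQ).
have -> : (X *m C)^T *m y = G *m (PiScaled R Q *m w).
  by rewrite -mulmxA -(mulmxA X) w_const /w trmx_mul -!mulmxA (mulmxA X^T) mulKVmx.
by rewrite mulKmx.
Qed.
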